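(* The function $q\mapsto (p(q)-c)\big(1-F(p(q)/q)\big)$ is strictly convex on $Q$.
   Context: Let $0<q_\ell<q_h<\infty$, $Q=[q_\ell,q_h]$, and let $c$ be a real number with $0<c<q_\ell$. Let $F$ be a probability distribution on $[0,1]$ with support $[0,1]$ admitting a twice continuously differentiable density $f:(0,1)\to\mathbb{R}_{>0}$. Define $r(v)=(1-F(v))/f(v)$ and $\psi(v)=v-r(v)$ on $(0,1)$, and assume $\psi'(v)>0$ whenever $\psi(v)>0$. For $q\in Q$, $p(q)$ is the unique maximizer over $p\in\mathbb{R}$ of $(p-c)\big(1-F(p/q)\big)$. *)

From Stdlib Require Import Reals.
From Coquelicot Require Import Coquelicot.
Open Scope R_scope.

Definition rfun (F f : R -> R) (v : R) : R := (1 - F v) / f v.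
Definition psi (F f : R -> R) (v : R) : R := v - rfun F f v.

(* Profit at unit value q and price x: (x - c)(1 - F(x/q)). *)
Definition profit (F : R -> R) (c q x : R) : R := (x - c) * (1 - F (x / q)).

Definition strictly_convex_on (a b : R) (g : R -> R) : Prop :=
  forall x y t, a <= x <= b -> a <= y <= b -> x <> y -> 0 < t < 1 ->
    g (t * x + (1 - t) * y) < t * g x + (1 - t) * g y.

(** The optimal profit V(q) = max_w (q w - c)(1 - F w), written in the
    normalized price w = x / q, is a pointwise maximum of functions affine
    in q, hence convex.  Equality in the convexity inequality between x <> y
    would force the maximizer v at the intermediate point to maximize both
    w |-> (x w - c)(1 - F w) and w |-> (y w - c)(1 - F w).  As v is interior,
    both first-order conditions hold; subtracting them gives 1 - F v = v f v,
    and then either one reduces to c f v = 0, impossible since c, f v > 0. *)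

From Stdlib Require Import Reals Lra Psatz.
From Coquelicot Require Import Coquelicot.
Open Scope R_scope.

Lemma is_derive_global_max_eq0 (h : R -> R) (v l : R) :
  is_derive h v l -> (forall w, h w <= h v) -> l = 0.
Proof.
  intros Hd Hmax.
  apply is_derive_Reals in Hd.
  assert (pr : derivable_pt h v) by (exists l; exact Hd).
  rewrite <- (derive_pt_eq_0 h v l pr Hd).
  apply (deriv_maximum h (v - 1) (v + 1) v pr); try lra.
  intros; apply Hmax.
Qed.

Lemma profit_scaled (F : R -> R) (c q w : R) :
  q <> 0 -> profit F c q (q * w) = (q * w - c) * (1 - F w).
Proof.
  intros Hq. unfold profit.
  replace (q * w / q) with w by (field; exact Hq).
  reflexivity.
Qed.

Lemma is_derive_scaled_profit (F f : R -> R) (c q v : R) :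
  is_derive F v (f v) ->
  is_derive (fun w => (q * w - c) * (1 - F w)) v
    (q * (1 - F v) - (q * v - c) * f v).
Proof.
  intros HF.
  replace (q * (1 - F v) - (q * v - c) * f v)
    with (q * (1 - F v) + (q * v - c) * (0 - f v)) by ring.
  apply (Derive.is_derive_mult (fun w => q * w - c) (fun w => 1 - F w)).
  - auto_derive; [exact I | ring].
  - apply (Derive.is_derive_minus (fun _ => 1) F); [| exact HF].
    auto_derive; [exact I | ring].
Qed.

Section OptimalPrice.

Variables (F : R -> R) (c q p : R).
Hypothesis (Hc : 0 < c) (Hq : 0 < q).
Hypothesis (HF0 : forall x, x <= 0 -> F x = 0) (HF1 : forall x, 1 <= x -> F x = 1).
Hypothesis Hp : forall x, x <> p -> profit F c q x < profit F c q p.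

Lemma optimal_price_gt0 : 0 < p / q.
Proof.
  destruct (Rle_lt_dec (p / q) 0) as [Hle | Hlt]; [exfalso | exact Hlt].
  assert (Hp0 : p <= 0).
  { replace p with (p / q * q) by (field; lra). nra. }
  assert (Hqp : q <> p) by lra.
  (* selling at the top of the support earns 0 > p - c *)
  pose proof (Hp q Hqp) as Hlt.
  unfold profit in Hlt.
  rewrite (HF0 _ Hle), HF1 in Hlt by (right; field; lra).
  lra.
Qed.

Lemma optimal_price_lt1 : p / q < 1.
Proof.
  destruct (Rlt_le_dec (p / q) 1) as [Hlt | Hge]; [exact Hlt | exfalso].
  assert (Hpq : p + q <> p) by lra.
  pose proof (Hp (p + q) Hpq) as Hlt.
  unfold profit in Hlt.
  rewrite (HF1 _ Hge), HF1 in Hlt.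
  - lra.
  - replace ((p + q) / q) with (p / q + 1) by (field; lra). lra.
Qed.

Lemma scaled_profit_le_optimal (w : R) :
  (q * w - c) * (1 - F w) <= profit F c q p.
Proof.
  rewrite <- profit_scaled by lra.
  destruct (Req_dec (q * w) p) as [E | E].
  - rewrite E; lra.
  - left; apply Hp; exact E.
Qed.

End OptimalPrice.

Lemma scaled_profit_foc (F f : R -> R) (c q v : R) :
  is_derive F v (f v) ->
  (forall w, (q * w - c) * (1 - F w) <= (q * v - c) * (1 - F v)) ->
  q * (1 - F v) - (q * v - c) * f v = 0.
Proof.
  intros HF Hmax.
  exact (is_derive_global_max_eq0 _ v _ (is_derive_scaled_profit F f c q v HF) Hmax).
Qed.

Lemma scaled_profit_foc_not_common (c x y Fv fv v : R) :
  0 < c -> 0 < fv -> x <> y ->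
  x * (1 - Fv) - (x * v - c) * fv = 0 ->
  y * (1 - Fv) - (y * v - c) * fv <> 0.
Proof.
  intros Hc Hf Hxy Dx Dy.
  assert (K : (x - y) * (1 - Fv - v * fv) = 0) by lra.
  apply Rmult_integral in K as [K | K]; [lra |].
  assert (c * fv = 0) by nra.
  nra.
Qed.

Lemma convex_comb_lt (t a b A B : R) :
  0 < t < 1 -> a <= A -> b <= B -> ~ (a = A /\ b = B) ->
  t * a + (1 - t) * b < t * A + (1 - t) * B.
Proof.
  intros Ht Ha Hb Hne.
  destruct (Req_dec a A) as [Ea | Ea]; [destruct (Req_dec b B) as [Eb | Eb] |].
  - tauto.
  - nra.
  - nra.
Qed.

Theorem lemma2 (ql qh c : R) (F f : R -> R) (p : R -> R)
  (* parameters *)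
  (Hql : 0 < ql) (Hqlqh : ql < qh) (Hc0 : 0 < c) (Hcql : c < ql)
  (* F is the CDF of a distribution on [0,1] with support [0,1] and density f *)
  (HF0 : forall x, x <= 0 -> F x = 0)
  (HF1 : forall x, 1 <= x -> F x = 1)
  (HFcont : forall x, continuous F x)
  (HFder : forall v, 0 < v < 1 -> is_derive F v (f v))
  (* f : (0,1) -> R_{>0}, twice continuously differentiable *)
  (Hfpos : forall v, 0 < v < 1 -> 0 < f v)
  (Hf1 : forall v, 0 < v < 1 -> ex_derive f v)
  (Hf2 : forall v, 0 < v < 1 -> ex_derive_n f 2 v)
  (Hf2c : forall v, 0 < v < 1 -> continuous (Derive_n f 2) v)
  (* regularity: psi' > 0 wherever psi > 0 *)
  (Hpsi : forall v, 0 < v < 1 -> 0 < psi F f v -> 0 < Derive (psi F f) v)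
  (* p q is the unique maximizer of x |-> (x - c)(1 - F(x/q)) *)
  (Hp : forall q, ql <= q <= qh -> forall x, x <> p q ->
          profit F c q x < profit F c q (p q)) :
  strictly_convex_on ql qh (fun q => profit F c q (p q)).
Proof.
  intros x y t Hx Hy Hxy Ht.
  set (q := t * x + (1 - t) * y).
  assert (Hq : ql <= q <= qh) by (unfold q; split; nra).
  set (v := p q / q).
  assert (Hv : 0 < v < 1).
  { assert (Hq0 : 0 < q) by lra.
    pose proof (Hp q Hq) as Hmax.
    split; [exact (optimal_price_gt0 F c q (p q) Hc0 Hq0 HF0 HF1 Hmax)
           | exact (optimal_price_lt1 F c q (p q) Hq0 HF1 Hmax)]. }
  assert (HFv := HFder v Hv).
  assert (Hopt : forall z, ql <= z <= qh -> forall w,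
            (z * w - c) * (1 - F w) <= profit F c z (p z)).
  { intros z Hz w. apply scaled_profit_le_optimal; [lra | exact (Hp z Hz)]. }
  assert (Hval : profit F c q (p q)
                 = t * ((x * v - c) * (1 - F v)) + (1 - t) * ((y * v - c) * (1 - F v))).
  { replace (p q) with (q * v) by (unfold v; field; lra).
    rewrite profit_scaled by lra.
    unfold q; ring. }
  rewrite Hval.
  apply convex_comb_lt; [exact Ht | apply Hopt; exact Hx | apply Hopt; exact Hy |].
  intros [Ex Ey].
  assert (Dx : x * (1 - F v) - (x * v - c) * f v = 0).
  { apply (scaled_profit_foc F f); [exact HFv |].
    intros w; rewrite Ex; exact (Hopt x Hx w). }
  assert (Dy : y * (1 - F v) - (y * v - c) * f v = 0).
  { apply (scaled_profit_foc F f); [exact HFv |].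
    intros w; rewrite Ey; exact (Hopt y Hy w). }
  exact (scaled_profit_foc_not_common c x y (F v) (f v) v Hc0 (Hfpos v Hv) Hxy Dx Dy).
Qed.
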